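(* Let $G=(V,E,L)$ be a hypergraph with loops. Then the set of extreme points of $\mathrm{PP}(G)$ is $$\mathcal{Q}=\Big\{z\in\mathbb{R}^{V\cup E\cup L}: z_i\in[0,1]\ \forall i\in V \text{ with }\{i,i\}\in L^+,\ z_i\in\{0,1\}\ \forall i\in V\text{ with }\{i,i\}\notin L^+,\ z_e=\prod_{k\in e}z_k\ \forall e\in E,\ z_{ii}=z_i^2\ \forall\{i,i\}\in L\Big\}.$$
   Context: A hypergraph with loops is $G=(V,E,L)$: $V$ a finite node set, $E$ a set of subsets of $V$ of cardinality at least two, $L$ a set of loops $\{i,i\}$, $i\in V$, partitioned as $L=L^-\cup L^+$ (minus/plus loops). $\mathrm{PP}(G):=\mathrm{conv}\{z\in\mathbb{R}^{V\cup E\cup L}: z_{ii}\ge z_i^2\ \forall\{i,i\}\in L^+,\ z_{ii}\le z_i^2\ \forall \{i,i\}\in L^-,\ z_e=\prod_{i\in e}z_i\ \forall e\in E,\ z_i\in[0,1]\ \forall i\in V\}$. *)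

From HB Require Import structures.
From mathcomp Require Import all_boot all_order all_algebra.
From mathcomp Require Import reals.
Set Implicit Arguments. Unset Strict Implicit. Unset Printing Implicit Defensive.
Import Order.TTheory GRing.Theory Num.Theory.
Local Open Scope ring_scope.

(* A hypergraph with loops on node set V : finType is given by
   E : {set {set V}} (edges, each of cardinality >= 2) and the loops
   L = L^- ∪ L^+, a loop {i,i} being identified with the node i;
   Lm, Lp : {set V} are the nodes carrying a minus/plus loop (disjoint). *)

Definition hyp_with_loops (V : finType) (E : {set {set V}}) (Lm Lp : {set V}) : Prop :=
  (forall e, e \in E -> 2 <= #|e|)%N /\ [disjoint Lm & Lp].

Definition hl_coord (V : finType) (E : {set {set V}}) (Lm Lp : {set V}) : Type :=
  (V + {e : {set V} | e \in E} + {i : V | i \in Lm :|: Lp})%type.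

Section Defs.
Variables (R : realType) (V : finType) (E : {set {set V}}) (Lm Lp : {set V}).
Local Notation C := (hl_coord E Lm Lp).

Definition zV (z : C -> R) (i : V) : R := z (inl (inl i)).
Definition zE (z : C -> R) (e : {e : {set V} | e \in E}) : R := z (inl (inr e)).
Definition zL (z : C -> R) (l : {i : V | i \in Lm :|: Lp}) : R := z (inr l).

Definition PP_set (z : C -> R) : Prop :=
  (forall l : {i : V | i \in Lm :|: Lp}, val l \in Lp -> zL z l >= zV z (val l) ^+ 2) /\
  (forall l : {i : V | i \in Lm :|: Lp}, val l \in Lm -> zL z l <= zV z (val l) ^+ 2) /\
  (forall e : {e : {set V} | e \in E}, zE z e = \prod_(k in val e) zV z k) /\
  (forall i : V, 0 <= zV z i <= 1).

End Defs.

Definition conv (R : realType) (C : Type) (S : (C -> R) -> Prop) (z : C -> R) : Prop :=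
  exists (n : nat) (lam : 'I_n -> R) (p : 'I_n -> C -> R),
    (forall j, 0 <= lam j) /\ \sum_(j < n) lam j = 1 /\ (forall j, S (p j)) /\
    (forall c, z c = \sum_(j < n) lam j * p j c).

Definition extreme_point (R : realType) (C : Type) (K : (C -> R) -> Prop) (z : C -> R) : Prop :=
  K z /\ forall (x y : C -> R) (t : R), K x -> K y -> 0 < t < 1 ->
    (forall c, z c = t * x c + (1 - t) * y c) -> x = z /\ y = z.

Definition PP (R : realType) (V : finType) (E : {set {set V}}) (Lm Lp : {set V}) :=
  conv (@PP_set R V E Lm Lp).

Definition Qset (R : realType) (V : finType) (E : {set {set V}}) (Lm Lp : {set V})
    (z : hl_coord E Lm Lp -> R) : Prop :=
  (forall i : V, i \in Lp -> 0 <= zV z i <= 1) /\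
  (forall i : V, i \notin Lp -> zV z i = 0 \/ zV z i = 1) /\
  (forall e : {e : {set V} | e \in E}, zE z e = \prod_(k in val e) zV z k) /\
  (forall l : {i : V | i \in Lm :|: Lp}, zL z l = zV z (val l) ^+ 2).

From HB Require Import structures.
From mathcomp Require Import all_boot all_order all_algebra.
From mathcomp Require Import boolp reals.
From mathcomp Require Import ring lra.
Set Implicit Arguments. Unset Strict Implicit. Unset Printing Implicit Defensive.
Import Order.TTheory GRing.Theory Num.Theory.
Local Open Scope ring_scope.

(* Let z be in Q and z = sum_j lam_j p_j with the p_j in the set whose hull is PP(G).
   At every node i Jensen's inequality sum_j lam_j p_j(i)^2 >= z_i^2 is tight: through the
   plus loop, sum_j lam_j p_j(i)^2 <= sum_j lam_j p_j(ii) = z_ii = z_i^2, or, when z_i is 0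
   or 1, through p_j(i)^2 <= p_j(i).  So every p_j with lam_j > 0 agrees with z on the
   nodes, hence on the edges, and on the loops, whose one-sided constraints are tight on
   average.  Conversely, an extreme point z lies in that set, and is the centre of no
   segment inside it.  Yet moving a loop value z_ii by +-(z_i^2 - z_ii), or a node value
   z_i without plus loop by +-z_i(1 - z_i) (edges following multilinearly, a minus loop by
   2 z_i times the shift), stays in the set; so both moves are trivial, i.e. z is in Q. *)

Section ConvexCombinations.
Variable R : realFieldType.

Lemma convex_comb_eq_lower n (lam f : 'I_n -> R) (m : R) :
  (forall j, 0 <= lam j) -> \sum_j lam j = 1 ->
  (forall j, 0 < lam j -> m <= f j) -> \sum_j lam j * f j <= m ->
  forall j, 0 < lam j -> f j = m.
Proof.
move=> lam_ge0 lam_sum1 f_ge sum_le j lam_j_gt0.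
have term_ge0 k : 0 <= lam k * (f k - m).
  have := lam_ge0 k; rewrite le_eqVlt => /predU1P[<- | lam_k_gt0]; first by rewrite mul0r.
  by rewrite mulr_ge0 ?subr_ge0 ?f_ge // ltW.
have sum_eq0 : \sum_k lam k * (f k - m) = 0.
  apply/eqP; rewrite eq_le sumr_ge0 ?andbT //.
  under eq_bigr do rewrite mulrBr.
  by rewrite sumrB -mulr_suml lam_sum1 mul1r subr_le0.
move/eqP: (psumr_eq0P (fun k _ => term_ge0 k) sum_eq0 (i := j) isT).
by rewrite mulf_eq0 gt_eqF //= subr_eq0 => /eqP.
Qed.

Lemma convex_comb_eq_upper n (lam f : 'I_n -> R) (m : R) :
  (forall j, 0 <= lam j) -> \sum_j lam j = 1 ->
  (forall j, 0 < lam j -> f j <= m) -> m <= \sum_j lam j * f j ->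
  forall j, 0 < lam j -> f j = m.
Proof.
move=> lam_ge0 lam_sum1 f_le sum_ge j lam_j_gt0; apply: oppr_inj.
apply: (convex_comb_eq_lower lam_ge0 lam_sum1 (f := fun k => - f k)) => //.
- by move=> k /f_le; rewrite lerN2.
- by under eq_bigr do rewrite mulrN; rewrite sumrN lerN2.
Qed.

Lemma convex_comb_variance n (lam f : 'I_n -> R) : \sum_j lam j = 1 ->
  \sum_j lam j * (f j - \sum_k lam k * f k) ^+ 2 =
  \sum_j lam j * f j ^+ 2 - (\sum_k lam k * f k) ^+ 2.
Proof.
move=> lam_sum1; set m := \sum_k lam k * f k.
transitivity (\sum_j (lam j * f j ^+ 2 - (2 * m) * (lam j * f j) + m ^+ 2 * lam j)).
  by apply: eq_bigr => j _; ring.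
by rewrite big_split /= sumrB -!mulr_sumr lam_sum1 -/m; ring.
Qed.

Lemma convex_comb_sqr_eq n (lam f : 'I_n -> R) :
  (forall j, 0 <= lam j) -> \sum_j lam j = 1 ->
  \sum_j lam j * f j ^+ 2 <= (\sum_j lam j * f j) ^+ 2 ->
  forall j, 0 < lam j -> f j = \sum_k lam k * f k.
Proof.
move=> lam_ge0 lam_sum1 sqr_le j lam_j_gt0; apply/eqP; rewrite -subr_eq0 -sqrf_eq0.
apply/eqP; apply: (convex_comb_eq_lower lam_ge0 lam_sum1
  (f := fun k => (f k - \sum_i lam i * f i) ^+ 2)) => //.
  by move=> k _; exact: sqr_ge0.
by rewrite convex_comb_variance // subr_le0.
Qed.

End ConvexCombinations.

Lemma prod_shift_at (R : comNzRingType) (T : finType) (A : {set T}) (x : T -> R) i a :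
  \prod_(k in A) (x k + (if k == i then a else 0)) =
  \prod_(k in A) x k + (if i \in A then a * \prod_(k in A | k != i) x k else 0).
Proof.
have [iA|iNA] := boolP (i \in A); last first.
  rewrite addr0; apply: eq_bigr => k kA.
  by case: eqP => [k_eq_i|_]; [rewrite -k_eq_i kA in iNA | rewrite addr0].
rewrite !(bigD1 i iA) /= eqxx.
rewrite (eq_bigr x) => [|k /andP[_ /negbTE ->]]; last by rewrite addr0.
by ring.
Qed.

Section ConvexHull.
Variables (R : realType) (C : Type) (S : (C -> R) -> Prop).

Lemma mem_conv z : S z -> conv S z.
Proof.
move=> Sz; exists 1%N, (fun _ => 1), (fun _ => z).
split=> [_|]; first exact: ler01.
by rewrite big_ord1; split=> //; split=> // c; rewrite big_ord1 mul1r.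
Qed.

Lemma extreme_conv_mem z : extreme_point (conv S) z -> S z.
Proof.
move=> [[n [lam [p [lam_ge0 [lam_sum1 [Sp z_eq]]]]]] z_ext].
have [j lam_j_gt0|lam_le0] := pickP (fun j => 0 < lam j); last first.
  have : \sum_j lam j = 0.
    by apply: big1 => j _; apply/eqP; rewrite eq_le lam_ge0 andbT leNgt lam_le0.
  by rewrite lam_sum1 => /eqP; rewrite oner_eq0.
have lam_j_le1 : lam j <= 1 by rewrite -lam_sum1 (bigD1 j) //= lerDl sumr_ge0.
(* z = s p_j + (1 - s) (rest), with s half the weight of p_j. *)
pose s := lam j / 2.
pose mu k := (lam k - (if k == j then s else 0)) / (1 - s).
have s_in01 : 0 < s < 1 by apply/andP; split; rewrite /s; lra.
have conv_rest : conv S (fun c => \sum_k mu k * p k c).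
  exists n, mu, p; split.
    move=> k; rewrite /mu; apply: divr_ge0; last by rewrite /s; lra.
    by case: eqP => [->|_]; rewrite /s; move: (lam_ge0 j) (lam_ge0 k); lra.
  split=> //; rewrite /mu -mulr_suml sumrB lam_sum1 (bigD1 j) //= eqxx big1 ?addr0.
    by rewrite divff //; apply/eqP; rewrite /s; lra.
  by move=> k /negbTE ->.
suff z_comb c : z c = s * p j c + (1 - s) * \sum_k mu k * p k c.
  by have [<- _] := z_ext _ _ _ (mem_conv (Sp j)) conv_rest s_in01 z_comb.
rewrite z_eq mulr_sumr.
have mu_eq k : lam k * p k c = (if k == j then s else 0) * p k c + (1 - s) * (mu k * p k c).
  by rewrite /mu; field; apply/eqP; rewrite /s; lra.
rewrite (eq_bigr _ (fun k _ => mu_eq k)) big_split /= (bigD1 j) //= eqxx big1 ?addr0 //.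
by move=> k /negbTE ->; rewrite mul0r.
Qed.

Lemma convex_comb_const n (lam : 'I_n -> R) (p : 'I_n -> C -> R) z c :
  (forall j, 0 <= lam j) -> \sum_j lam j = 1 -> (forall j, 0 < lam j -> p j = z) ->
  \sum_j lam j * p j c = z c.
Proof.
move=> lam_ge0 lam_sum1 p_eq.
rewrite -[RHS]mul1r -lam_sum1 mulr_suml; apply: eq_bigr => j _.
by have := lam_ge0 j; rewrite le_eqVlt => /predU1P[<-|/p_eq ->]; rewrite ?mul0r.
Qed.

Definition conv_rigid z := forall n (lam : 'I_n -> R) (p : 'I_n -> C -> R),
  (forall j, 0 <= lam j) -> \sum_j lam j = 1 -> (forall j, S (p j)) ->
  (forall c, z c = \sum_j lam j * p j c) -> forall j, 0 < lam j -> p j = z.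

Lemma conv_rigid_extreme z : S z -> conv_rigid z -> extreme_point (conv S) z.
Proof.
move=> Sz z_rigid; split; first exact: mem_conv.
suff left_eq x y t : conv S x -> conv S y -> 0 < t < 1 ->
    (forall c, z c = t * x c + (1 - t) * y c) -> x = z.
  move=> x y t Cx Cy t01 z_eq; split; first exact: left_eq Cx Cy t01 z_eq.
  apply: (left_eq y x (1 - t)) => // [|c]; first by move: t01 => /andP[]; lra.
  by rewrite z_eq; ring.
move=> [n [a [p [a_ge0 [a_sum1 [Sp x_eq]]]]]] [m [b [q [b_ge0 [b_sum1 [Sq y_eq]]]]]].
move=> /andP[t_gt0 t_lt1] z_eq.
pose lam k := match split k with inl j => t * a j | inr j => (1 - t) * b j end.
pose r k := match split k with inl j => p j | inr j => q j end.
have sum_split (F : R -> (C -> R) -> R) : \sum_(k < n + m) F (lam k) (r k) =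
    \sum_j F (t * a j) (p j) + \sum_j F ((1 - t) * b j) (q j).
  rewrite big_split_ord /lam /r.
  by congr (_ + _); apply: eq_bigr => j _; rewrite ?(unsplitK (inl j)) ?(unsplitK (inr j)).
have r_eq : forall k, 0 < lam k -> r k = z.
  apply: z_rigid => [k|||c].
  - rewrite /lam; case: split => j; apply: mulr_ge0 => //; lra.
  - by rewrite (sum_split (fun l _ => l)) -!mulr_sumr a_sum1 b_sum1; ring.
  - by move=> k; rewrite /r; case: split.
  - rewrite (sum_split (fun l u => l * u c)) z_eq x_eq y_eq !mulr_sumr.
    by congr (_ + _); apply: eq_bigr => j _; ring.
apply: funext => c; rewrite x_eq; apply: convex_comb_const => // j a_j_gt0.
have := r_eq (lshift m j); rewrite /lam /r (unsplitK (inl j)); apply.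
exact: mulr_gt0.
Qed.

Lemma extreme_segment_eq0 (K : (C -> R) -> Prop) z d :
  extreme_point K z -> (forall s, -1 <= s <= 1 -> K (fun c => z c + s * d c)) ->
  forall c, d c = 0.
Proof.
move=> [_ z_ext] K_seg c.
have half_in01 : 0 < (2^-1 : R) < 1 by apply/andP; split; lra.
have z_mid c' : z c' = 2^-1 * (z c' + 1 * d c') + (1 - 2^-1) * (z c' + (-1) * d c').
  by field.
have K_plus : K (fun c => z c + 1 * d c) by apply: K_seg; apply/andP; split; lra.
have K_minus : K (fun c => z c + (-1) * d c) by apply: K_seg; apply/andP; split; lra.
have [/(congr1 (fun f => f c)) /= + _] := z_ext _ _ _ K_plus K_minus half_in01 z_mid.
by lra.
Qed.

End ConvexHull.

Section PolytopeVertices.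
Variables (R : realType) (V : finType) (E : {set {set V}}) (Lm Lp : {set V}).
Local Notation C := (hl_coord E Lm Lp).
Local Notation edge := {e : {set V} | e \in E}.
Local Notation loop := {i : V | i \in Lm :|: Lp}.
Local Notation PPs := (@PP_set R V E Lm Lp).

Definition hl_point (x : V -> R) (y : edge -> R) (w : loop -> R) : C -> R := fun c =>
  match c with inl (inl i) => x i | inl (inr e) => y e | inr l => w l end.

Section Shift.
Variables (z : C -> R) (s : R) (x : V -> R) (y : edge -> R) (w : loop -> R).
Local Notation z' := (fun c => z c + s * hl_point x y w c).

Lemma zV_shift i : zV z' i = zV z i + s * x i. Proof. by []. Qed.
Lemma zE_shift e : zE z' e = zE z e + s * y e. Proof. by []. Qed.
Lemma zL_shift l : zL z' l = zL z l + s * w l. Proof. by []. Qed.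
End Shift.

Definition loop_dir (z : C -> R) (l : loop) : C -> R :=
  hl_point (fun _ => 0) (fun _ => 0)
    (fun l' => if l' == l then zV z (val l) ^+ 2 - zL z l else 0).

Definition vertex_dir (z : C -> R) (i : V) (a : R) : C -> R :=
  hl_point (fun k => if k == i then a else 0)
    (fun e => if i \in val e then a * \prod_(k in val e | k != i) zV z k else 0)
    (fun l => if val l == i then 2 * zV z i * a else 0).

Lemma PP_set_loop_dir z l s : PPs z -> -1 <= s <= 1 ->
  PPs (fun c => z c + s * loop_dir z l c).
Proof.
move=> [z_plus [z_minus [zE_prod z01]]] /andP[s_ge s_le].
split; [|split; [|split]].
- move=> l' l'_plus; rewrite zL_shift zV_shift mulr0 addr0.
  case: eqP l'_plus => [-> | _] l'_plus; last by rewrite mulr0 addr0; exact: z_plus.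
  by have := z_plus l l'_plus; nra.
- move=> l' l'_minus; rewrite zL_shift zV_shift mulr0 addr0.
  case: eqP l'_minus => [-> | _] l'_minus; last by rewrite mulr0 addr0; exact: z_minus.
  by have := z_minus l l'_minus; nra.
- move=> e; rewrite zE_shift mulr0 addr0 zE_prod.
  by apply: eq_bigr => k _; rewrite zV_shift mulr0 addr0.
- by move=> k; rewrite zV_shift mulr0 addr0.
Qed.

Lemma PP_set_vertex_dir z i s : PPs z -> i \notin Lp -> -1 <= s <= 1 ->
  PPs (fun c => z c + s * vertex_dir z i (zV z i * (1 - zV z i)) c).
Proof.
move=> [z_plus [z_minus [zE_prod z01]]] i_notplus /andP[s_ge s_le].
rewrite /vertex_dir.
have /andP[zi_ge0 zi_le1] := z01 i.
split; [|split; [|split]].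
- move=> l l_plus; rewrite zL_shift zV_shift.
  have /negbTE -> : val l != i by apply: contraNneq i_notplus => <-.
  by rewrite !mulr0 !addr0; exact: z_plus.
- move=> l l_minus; rewrite zL_shift zV_shift.
  case: eqP => [<- | _]; last by rewrite !mulr0 !addr0; exact: z_minus.
  have := z_minus l l_minus; set v := zV z _; have := sqr_ge0 (s * (v * (1 - v))).
  by nra.
- move=> e; rewrite zE_shift; apply/esym.
  under eq_bigr do rewrite zV_shift (fun_if (GRing.mul s)) mulr0.
  by rewrite prod_shift_at zE_prod; case: ifP; rewrite ?mulr0 // mulrA.
- move=> k; rewrite zV_shift; case: eqP => [-> | _]; last by rewrite mulr0 addr0.
  move: zi_ge0 zi_le1; set v := zV z i => v_ge0 v_le1.
  have : 0 <= v * (1 + s * (1 - v)) by apply: mulr_ge0 => //; nra.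
  have : 0 <= (1 - v) * (1 - s * v) by apply: mulr_ge0; nra.
  by move=> ? ?; apply/andP; split; nra.
Qed.

Lemma extreme_Qset z : extreme_point (@PP R V E Lm Lp) z -> Qset z.
Proof.
move=> z_ext; have z_in := extreme_conv_mem z_ext.
have [_ [_ [zE_prod z01]]] := z_in.
split; [by move=> i _; exact: z01 | split; [|split=> //]].
- move=> i i_notplus.
  have := extreme_segment_eq0 z_ext
    (fun s s01 => mem_conv (PP_set_vertex_dir z_in i_notplus s01)).
  move=> /(_ (inl (inl i))) /=; rewrite eqxx => /eqP.
  by rewrite mulf_eq0 subr_eq0 => /orP[/eqP | /eqP]; [left | right].
- move=> l.
  have := extreme_segment_eq0 z_ext (fun s s01 => mem_conv (PP_set_loop_dir l z_in s01)).
  by move=> /(_ (inr l)) /=; rewrite eqxx => /eqP; rewrite subr_eq0 => /eqP.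
Qed.

Lemma Qset_PP_set z : Qset z -> PPs z.
Proof.
move=> [z01 [z_bin [zE_prod zL_sqr]]].
split; [by move=> l _; rewrite zL_sqr | split; [by move=> l _; rewrite zL_sqr | split=> //]].
move=> i; have [/z01 //|/z_bin[] ->] := boolP (i \in Lp); by rewrite ?lexx ?ler01.
Qed.

Lemma Qset_conv_rigid z : Qset z -> conv_rigid PPs z.
Proof.
move=> [z01 [z_bin [zE_prod zL_sqr]]] n lam p lam_ge0 lam_sum1 Sp z_eq.
have zV_eq i : zV z i = \sum_j lam j * zV (p j) i := z_eq (inl (inl i)).
have zL_eq l : zL z l = \sum_j lam j * zL (p j) l := z_eq (inr l).
have sqr_le i : \sum_j lam j * zV (p j) i ^+ 2 <= zV z i ^+ 2.
  have [i_plus | i_notplus] := boolP (i \in Lp).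
    have i_loop : i \in Lm :|: Lp by rewrite inE i_plus orbT.
    rewrite -(zL_sqr (exist _ i i_loop)) zL_eq; apply: ler_sum => j _.
    by apply: ler_wpM2l => //; exact: (Sp j).1 (exist _ i i_loop) i_plus.
  have -> : zV z i ^+ 2 = zV z i by case: (z_bin i i_notplus) => ->; rewrite ?expr0n ?expr1n.
  rewrite zV_eq; apply: ler_sum => j _; apply: ler_wpM2l => //.
  by have /andP[? ?] := (Sp j).2.2.2 i; nra.
have pV_eq j i : 0 < lam j -> zV (p j) i = zV z i.
  move=> lam_j_gt0; rewrite zV_eq; apply: convex_comb_sqr_eq => //.
  by rewrite -zV_eq.
move=> j lam_j_gt0.
have pL_eq l : zL (p j) l = zL z l.
  have := valP l; rewrite inE => /orP[l_minus | l_plus].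
    apply: (convex_comb_eq_upper (f := fun k => zL (p k) l)) => // [k lam_k_gt0|].
      by rewrite zL_sqr -(pV_eq k) //; exact: (Sp k).2.1.
    by rewrite -zL_eq.
  apply: (convex_comb_eq_lower (f := fun k => zL (p k) l)) => // [k lam_k_gt0|].
    by rewrite zL_sqr -(pV_eq k) //; exact: (Sp k).1.
  by rewrite -zL_eq.
apply: funext => -[[i | e] | l]; [exact: pV_eq | | exact: pL_eq].
change (zE (p j) e = zE z e); rewrite (Sp j).2.2.1 zE_prod.
by apply: eq_bigr => k _; exact: pV_eq.
Qed.

End PolytopeVertices.

Theorem lemma2 (R : realType) (V : finType) (E : {set {set V}}) (Lm Lp : {set V})
  (HG : hyp_with_loops E Lm Lp) (z : hl_coord E Lm Lp -> R) :
  extreme_point (@PP R V E Lm Lp) z <-> Qset z.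
Proof.
split; first exact: extreme_Qset.
move=> z_Q; apply: conv_rigid_extreme; [exact: Qset_PP_set | exact: Qset_conv_rigid].
Qed.
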